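(* Let $\lambda,\mu,\nu>0$ and equip $S^3$ with the generalised Lorentzian Berger metric $h$ described in the context, with $h$-orthonormal left-invariant frame $X,Y,Z$. Then $$K(X,Y)=h(R(X,Y)Y,X)=\frac{(\lambda^2+\mu^2-\nu^2)^2+4\nu^2(\mu^2-\nu^2)}{(\lambda\mu\nu)^2},$$ $$K(X,Z)=h(R(X,Z)Z,X)=\frac{(\lambda^2-\mu^2+\nu^2)^2-4\mu^2(\mu^2-\nu^2)}{(\lambda\mu\nu)^2},$$ $$K(Y,Z)=h(R(Y,Z)Z,Y)=\frac{(\lambda^2+\mu^2+\nu^2)^2+2(\lambda^4-\mu^4-\nu^4)}{(\lambda\mu\nu)^2}.$$
   Context: $S^3=\{(z,w)\in\mathbb C^2: |z|^2+|w|^2=1\}$ is a Lie group with multiplication $(z_1,w_1)\cdot(z_2,w_2)=(z_1z_2-\bar w_1w_2,\ \bar z_1w_2+w_1z_2)$ and inverse $(z,w)^{-1}=(\bar z,-w)$; the same formula defines $p\cdot v$ for $v\in\mathbb C^2$. Let $\langle (z_1,w_1),(z_2,w_2)\rangle=\mathrm{Re}(z_1\bar z_2+w_1\bar w_2)$. The Lorentzian metric is $h_p(A,B)=-\lambda^2\langle p^{-1}A,(i,0)\rangle\langle p^{-1}B,(i,0)\rangle+\mu^2\langle p^{-1}A,(0,-1)\rangle\langle p^{-1}B,(0,-1)\rangle+\nu^2\langle p^{-1}A,(0,i)\rangle\langle p^{-1}B,(0,i)\rangle+\langle p^{-1}A,(1,0)\rangle\langle p^{-1}B,(1,0)\rangle$.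 The frame is $X_p=\lambda^{-1}p\cdot(i,0)$, $Y_p=\mu^{-1}p\cdot(0,-1)$, $Z_p=\nu^{-1}p\cdot(0,i)$, with $h(X,X)=-1$, $h(Y,Y)=h(Z,Z)=1$. $R(A,B)C=\nabla_A\nabla_BC-\nabla_B\nabla_AC-\nabla_{[A,B]}C$ for the Levi-Civita connection $\nabla$ of $h$; the paper denotes the quantities $h(R(A,B)B,A)$ for frame vectors by $K(A,B)$. *)

From HB Require Import structures.
From mathcomp Require Import all_boot all_order all_algebra.
From mathcomp Require Import all_classical all_reals all_analysis.
Set Implicit Arguments. Unset Strict Implicit. Unset Printing Implicit Defensive.
Import Order.TTheory GRing.Theory Num.Theory.
Import numFieldNormedType.Exports.
Local Open Scope ring_scope.

(* C^2 is identified with R^4 = 'rV[R]_4 via (z, w) = (a + i b, c + i d)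
   |-> (a, b, c, d). *)
Section Berger.
Variable R : realType.
Notation V := 'rV[R]_4.

Definition mk4 (a b c d : R) : V := \row_(i < 4) nth 0 [:: a; b; c; d] i.
Definition cd (p : V) (k : nat) : R := p ord0 (inord k).

(* (z1,w1).(z2,w2) = (z1 z2 - conj(w1) w2, conj(z1) w2 + w1 z2) *)
Definition qmul (p q : V) : V :=
  let a1 := cd p 0 in let b1 := cd p 1 in let c1 := cd p 2 in let d1 := cd p 3 in
  let a2 := cd q 0 in let b2 := cd q 1 in let c2 := cd q 2 in let d2 := cd q 3 in
  mk4 (a1 * a2 - b1 * b2 - (c1 * c2 + d1 * d2))
      (a1 * b2 + b1 * a2 - (c1 * d2 - d1 * c2))
      ((a1 * c2 + b1 * d2) + (c1 * a2 - d1 * b2))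
      ((a1 * d2 - b1 * c2) + (c1 * b2 + d1 * a2)).

(* (z,w)^{-1} = (conj z, - w) *)
Definition qinv (p : V) : V := mk4 (cd p 0) (- cd p 1) (- cd p 2) (- cd p 3).

Definition dot (u v : V) : R :=
  cd u 0 * cd v 0 + cd u 1 * cd v 1 + cd u 2 * cd v 2 + cd u 3 * cd v 3.

Definition S3 (p : V) : Prop := dot p p = 1.

Definition e_i0 : V := mk4 0 1 0 0.
Definition e_0m1 : V := mk4 0 0 (-1) 0.
Definition e_0i : V := mk4 0 0 0 1.
Definition e_10 : V := mk4 1 0 0 0.

Definition hB (lam mu nu : R) (p A B : V) : R :=
  let a := qmul (qinv p) A in let b := qmul (qinv p) B in
  - lam ^+ 2 * dot a e_i0 * dot b e_i0
  + mu ^+ 2 * dot a e_0m1 * dot b e_0m1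
  + nu ^+ 2 * dot a e_0i * dot b e_0i
  + dot a e_10 * dot b e_10.

(* vector fields (given by ambient extensions to C^2 = R^4) *)
Definition VF := V -> V.

Definition Xf (lam : R) : VF := fun p => lam^-1 *: qmul p e_i0.
Definition Yf (mu : R) : VF := fun p => mu^-1 *: qmul p e_0m1.
Definition Zf (nu : R) : VF := fun p => nu^-1 *: qmul p e_0i.

Fixpoint Ck {W : normedModType R} (k : nat) (f : V -> W) : Prop :=
  match k with
  | 0 => True
  | k'.+1 => (forall x, differentiable f x) /\
             (forall v : V, Ck k' (fun x => derive f x v))
  end.
Definition smooth {W : normedModType R} (f : V -> W) : Prop := forall k, Ck k f.

(* smooth vector fields on S^3 (represented by smooth ambient extensions
   that are tangent to S^3 along S^3) *)
Definition tangentVF (A : VF) : Prop := forall p, S3 p -> dot (A p) p = 0.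
Definition admissible (A : VF) : Prop := smooth A /\ tangentVF A.

(* Lie bracket [A,B] (ambient formula, restricted to S^3) *)
Definition bracket (A B : VF) : VF :=
  fun p => derive B p (A p) - derive A p (B p).

(* Levi-Civita connection of the metric g on S^3: an affine connection on the
   smooth tangent vector fields of S^3 (values only matter on S^3), which is
   torsion free and compatible with g. *)
Definition is_LeviCivita (g : V -> V -> V -> R) (nab : VF -> VF -> VF) : Prop :=
  (forall A B, admissible A -> admissible B -> admissible (nab A B)) /\
  (forall A A' B B' p, admissible A -> admissible A' -> admissible B ->
     admissible B' -> S3 p -> A p = A' p -> (forall q, S3 q -> B q = B' q) ->
     nab A B p = nab A' B' p) /\
  (forall A A' B p, admissible A -> admissible A' -> admissible B -> S3 p ->
     nab (fun q => A q + A' q) B p = nab A B p + nab A' B p) /\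
  (forall (f : V -> R) A B p, smooth f -> admissible A -> admissible B -> S3 p ->
     nab (fun q => f q *: A q) B p = f p *: nab A B p) /\
  (forall A B B' p, admissible A -> admissible B -> admissible B' -> S3 p ->
     nab A (fun q => B q + B' q) p = nab A B p + nab A B' p) /\
  (forall (f : V -> R) A B p, smooth f -> admissible A -> admissible B -> S3 p ->
     nab A (fun q => f q *: B q) p = derive f p (A p) *: B p + f p *: nab A B p) /\
  (forall A B p, admissible A -> admissible B -> S3 p ->
     nab A B p - nab B A p = bracket A B p) /\
  (forall A B C p, admissible A -> admissible B -> admissible C -> S3 p ->
     derive (fun q => g q (B q) (C q)) p (A p)
       = g p (nab A B p) (C p) + g p (B p) (nab A C p)).

Definition curv (nab : VF -> VF -> VF) (A B C : VF) : VF :=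
  fun p => nab A (nab B C) p - nab B (nab A C) p - nab (bracket A B) C p.

End Berger.

From HB Require Import structures.
From mathcomp Require Import all_boot all_order all_algebra.
From mathcomp Require Import all_classical all_reals all_analysis.
From mathcomp Require Import ring lra.
Import Order.TTheory GRing.Theory Num.Theory.
Import numFieldNormedType.Exports.
Local Open Scope ring_scope.
Set Implicit Arguments.
Unset Strict Implicit.
Unset Printing Implicit Defensive.

(* X, Y, Z are left-invariant fields q |-> q a with a a pure quaternion, and h
   is left-invariant: h_q(q a, q b) = |q|^4 h_1(a, b) is constant on S^3.  The
   Koszul formula for left-invariant fields therefore becomes algebraic,
   nabla_{q a} (q b) = q Gamma(a, b) with
     2 h_1(Gamma(a, b), c) = h_1([a,b], c) + h_1([c,b], a) - h_1([a,c], b),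
   which is solved for Gamma in closed form.  Then
     R(q a, q b)(q c)
       = q (Gamma(a, Gamma(b, c)) - Gamma(b, Gamma(a, c)) - Gamma([a,b], c)),
   and the three sectional values are rational identities in lambda, mu, nu. *)

Section Coordinates.
Context {R : realType}.
Notation V := 'rV[R]_4.

Lemma cd_mk4_0 (a b c d : R) : cd (mk4 a b c d) 0 = a.
Proof. by rewrite /cd mxE inordK. Qed.
Lemma cd_mk4_1 (a b c d : R) : cd (mk4 a b c d) 1 = b.
Proof. by rewrite /cd mxE inordK. Qed.
Lemma cd_mk4_2 (a b c d : R) : cd (mk4 a b c d) 2 = c.
Proof. by rewrite /cd mxE inordK. Qed.
Lemma cd_mk4_3 (a b c d : R) : cd (mk4 a b c d) 3 = d.
Proof. by rewrite /cd mxE inordK. Qed.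
Lemma cdD (u v : V) k : cd (u + v) k = cd u k + cd v k.
Proof. by rewrite /cd mxE. Qed.
Lemma cdN (u : V) k : cd (- u) k = - cd u k.
Proof. by rewrite /cd mxE. Qed.
Lemma cdZ (a : R) (u : V) k : cd (a *: u) k = a * cd u k.
Proof. by rewrite /cd mxE. Qed.
Definition cdE := (cd_mk4_0, cd_mk4_1, cd_mk4_2, cd_mk4_3, cdD, cdN, cdZ).

Lemma cd_inj (u v : V) : cd u 0 = cd v 0 -> cd u 1 = cd v 1 ->
  cd u 2 = cd v 2 -> cd u 3 = cd v 3 -> u = v.
Proof.
rewrite /cd => u0 u1 u2 u3; apply/rowP => -[i lti].
have -> : Ordinal lti = inord i by apply/val_inj; rewrite /= inordK.
by case: i lti => [|[|[|[|//]]]].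
Qed.

Lemma Ck_cst (W : normedModType R) k (c : W) : Ck k (fun _ : V => c).
Proof.
elim: k c => [//|k IHk] c /=; split => [x|v]; first exact: differentiable_cst.
have -> : (fun x : V => 'D_v (fun _ : V => c) x) = (fun _ => 0).
  by apply: funext => x; exact: derive_cst.
exact: IHk.
Qed.

Section LinearMaps.
Context {n : nat} {W : normedModType R} {f : 'rV[R]_n -> W}.
Hypothesis f_linear : linear f.

Let F : {linear 'rV[R]_n -> W} :=
  HB.pack f (GRing.isLinear.Build _ _ _ _ _ f_linear).

Lemma linear_rV_continuous : continuous f.
Proof.
have -> : f = fun q => \sum_(i < n) q ord0 i *: f (delta_mx 0 i).
  apply: funext => q.
  transitivity (F (\sum_(i < n) q ord0 i *: delta_mx 0 i)).
    by rewrite -row_sum_delta.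
  by rewrite linear_sum; apply: eq_bigr => i _; rewrite linearZ.
apply: continuous_big => [|i _ x]; first exact: add_continuous.
by apply: continuousZr_tmp; exact: coord_continuous.
Qed.

Lemma linear_rV_derive x v : differentiable f x /\ 'D_v f x = f v.
Proof.
have cF : continuous F := linear_rV_continuous.
have dF : differentiable F x := linear_differentiable x cF.
by split => //; rewrite deriveE // (diff_lin x cF).
Qed.

End LinearMaps.

Lemma linear_rV_smooth (W : normedModType R) (f : V -> W) : linear f -> smooth f.
Proof.
move=> f_linear [//|k] /=; split => [x|v].
  by case: (linear_rV_derive f_linear x 0).
have -> : (fun x : V => 'D_v f x) = (fun _ => f v).
  by apply: funext => x; case: (linear_rV_derive f_linear x v).
exact: Ck_cst.
Qed.

Lemma is_derive_cd (k : nat) (p v : V) : is_derive p v (fun q => cd q k) (cd v k).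
Proof.
have cd_linear : linear (fun q : V => cd q k) by move=> a x y; rewrite cdD cdZ.
have [dcd dcdE] := linear_rV_derive cd_linear p v.
by apply: DeriveDef => //; exact: diff_derivable.
Qed.

Lemma is_derive_dot_self (p v : V) : is_derive p v (fun q => dot q q) (2 * dot v p).
Proof.
pose sq k := is_deriveM (is_derive_cd k p v) (is_derive_cd k p v).
have sum_sq :=
  is_deriveD (is_deriveD (is_deriveD (sq 0%N) (sq 1%N)) (sq 2%N)) (sq 3%N).
apply: is_derive_eq sum_sq _.
rewrite /dot /GRing.scale /=; ring.
Qed.

End Coordinates.

Section LeftInvariantFields.
Context {R : realType}.
Notation V := 'rV[R]_4.

Definition pure (a : V) : Prop := cd a 0 = 0.
Definition linv_field (a : V) : VF R := fun q => qmul q a.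
Definition qcomm (a b : V) : V := qmul a b - qmul b a.

Lemma pure_qcomm (a b : V) : pure (qcomm a b).
Proof. rewrite /pure /qcomm /qmul !cdE; ring. Qed.

Lemma qinv_mulK (p x : V) : qmul (qinv p) (qmul p x) = dot p p *: x.
Proof. apply: cd_inj; rewrite /qinv /qmul /dot !cdE; ring. Qed.

Lemma qmul_invK (p x : V) : qmul p (qmul (qinv p) x) = dot p p *: x.
Proof. apply: cd_inj; rewrite /qinv /qmul /dot !cdE; ring. Qed.

Lemma qinv_mulB (p x y : V) :
  qmul (qinv p) (x - y) = qmul (qinv p) x - qmul (qinv p) y.
Proof. apply: cd_inj; rewrite /qinv /qmul !cdE; ring. Qed.

Lemma dot_linv_field (p a : V) : dot (linv_field a p) p = dot p p * cd a 0.
Proof. rewrite /dot /linv_field /qmul !cdE; ring. Qed.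

Lemma linv_field_linear (a : V) : linear (linv_field a).
Proof. by move=> k u v; apply: cd_inj; rewrite /linv_field /qmul !cdE; ring. Qed.

Lemma linv_field_admissible (a : V) : pure a -> admissible (linv_field a).
Proof.
move=> pa; split; first exact: linear_rV_smooth (linv_field_linear a).
by move=> p _; rewrite dot_linv_field pa mulr0.
Qed.

Lemma bracket_linv_field (a b : V) :
  bracket (linv_field a) (linv_field b) = linv_field (qcomm a b).
Proof.
apply: funext => p; rewrite /bracket.
rewrite (linear_rV_derive (linv_field_linear b) p _).2.
rewrite (linear_rV_derive (linv_field_linear a) p _).2.
by apply: cd_inj; rewrite /linv_field /qcomm /qmul !cdE; ring.
Qed.

End LeftInvariantFields.

Section Metric.
Context {R : realType}.
Variables lam mu nu : R.
Notation V := 'rV[R]_4.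

Definition hE (x y : V) : R :=
  - lam ^+ 2 * cd x 1 * cd y 1 + mu ^+ 2 * cd x 2 * cd y 2
  + nu ^+ 2 * cd x 3 * cd y 3 + cd x 0 * cd y 0.

Lemma hE_sym (x y : V) : hE x y = hE y x.
Proof. rewrite /hE; ring. Qed.

Lemma hEBl (x y z : V) : hE (x - y) z = hE x z - hE y z.
Proof. rewrite /hE !cdE; ring. Qed.

Lemma hBE (p u v : V) :
  hB lam mu nu p u v = hE (qmul (qinv p) u) (qmul (qinv p) v).
Proof. rewrite /hB /hE /dot /e_i0 /e_0m1 /e_0i /e_10 !cdE; ring. Qed.

Lemma hB_linv_field (p b c : V) :
  hB lam mu nu p (linv_field b p) (linv_field c p) = dot p p ^+ 2 * hE b c.
Proof. rewrite hBE /linv_field !qinv_mulK /hE !cdE; ring. Qed.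

(* the function is |q|^4 hE b c, constant on S^3 *)
Lemma derive_hB_linv_field (b c p v : V) : dot v p = 0 ->
  'D_v (fun q => hB lam mu nu q (linv_field b q) (linv_field c q)) p = 0.
Proof.
move=> pv; have := is_deriveZ (hE b c) (is_deriveX 2 (is_derive_dot_self p v)).
have -> : hE b c \*: (fun q : V => dot q q) ^+ 2
          = fun q => hB lam mu nu q (linv_field b q) (linv_field c q).
  by apply: funext => q; rewrite hB_linv_field /GRing.scale /= mulrC.
by case=> _ ->; rewrite pv mulr0 !scaler0.
Qed.

Hypotheses (lam0 : lam != 0) (mu0 : mu != 0) (nu0 : nu != 0).

Lemma pure_hE_inj (x y : V) : pure x -> pure y ->
  (forall c, pure c -> hE x c = hE y c) -> x = y.
Proof.
move=> px py hxy.
have := hxy (mk4 0 1 0 0) (cd_mk4_0 _ _ _ _).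
have := hxy (mk4 0 0 1 0) (cd_mk4_0 _ _ _ _).
have := hxy (mk4 0 0 0 1) (cd_mk4_0 _ _ _ _).
rewrite /hE !cdE !mulr0 !mulr1 !addr0 !add0r => e3 e2 e1.
have sq_neq0 (t : R) : t != 0 -> t ^+ 2 != 0 by move=> t0; rewrite expf_neq0.
apply: cd_inj; rewrite ?px ?py //.
- by move: e1; apply: mulfI; rewrite oppr_eq0 sq_neq0.
- by move: e2; apply: mulfI; rewrite sq_neq0.
- by move: e3; apply: mulfI; rewrite sq_neq0.
Qed.
End Metric.

Section Connection.
Context {R : realType}.
Variables lam mu nu : R.
Notation V := 'rV[R]_4.
Notation hE := (hE lam mu nu).

Definition koszul (a b c : V) : R :=
  (hE (qcomm a b) c + hE (qcomm c b) a - hE (qcomm a c) b) / 2.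

(* solves the Koszul formula in the h-orthogonal basis (i,0), (0,1), (0,i) *)
Definition christoffel (a b : V) : V :=
  let a1 := cd a 1 in let a2 := cd a 2 in let a3 := cd a 3 in
  let b1 := cd b 1 in let b2 := cd b 2 in let b3 := cd b 3 in
  mk4 0 (- (a2 * b3 - a3 * b2) + (nu ^+ 2 - mu ^+ 2) * (a2 * b3 + a3 * b2) / lam ^+ 2)
        (- (a3 * b1 - a1 * b3) + (lam ^+ 2 + nu ^+ 2) * (a1 * b3 + a3 * b1) / mu ^+ 2)
        (- (a1 * b2 - a2 * b1) - (lam ^+ 2 + mu ^+ 2) * (a1 * b2 + a2 * b1) / nu ^+ 2).

Lemma pure_christoffel (a b : V) : pure (christoffel a b).
Proof. exact: cd_mk4_0. Qed.

Definition lie_curv (a b c : V) : V :=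
  christoffel a (christoffel b c) - christoffel b (christoffel a c)
  - christoffel (qcomm a b) c.

Hypotheses (lam0 : lam != 0) (mu0 : mu != 0) (nu0 : nu != 0).

Lemma koszul_christoffel (a b c : V) : pure a -> pure b ->
  koszul a b c = hE (christoffel a b) c.
Proof.
move=> pa pb; rewrite /koszul /christoffel /qcomm /hE /qmul !cdE pa pb.
by field; rewrite lam0 mu0 nu0.
Qed.

Section LeviCivita.
Variable nab : VF R -> VF R -> VF R.
Hypothesis nabLC : is_LeviCivita (hB lam mu nu) nab.

Let nabla_id (p a b : V) : V :=
  qmul (qinv p) (nab (linv_field a) (linv_field b) p).

Lemma hE_nabla_skew (p a b c : V) : S3 p -> pure a -> pure b -> pure c ->
  hE (nabla_id p a b) c + hE (nabla_id p a c) b = 0.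
Proof.
case: nabLC => _ [_ [_ [_ [_ [_ [_ compat]]]]]] Sp pa pb pc.
have := compat _ _ _ p (linv_field_admissible pa) (linv_field_admissible pb)
  (linv_field_admissible pc) Sp.
rewrite derive_hB_linv_field; last by rewrite dot_linv_field pa mulr0.
by rewrite !hBE !qinv_mulK Sp !scale1r (hE_sym _ _ _ b) => <-.
Qed.

Lemma hE_nabla_torsion (p a b c : V) : S3 p -> pure a -> pure b ->
  hE (nabla_id p a b) c - hE (nabla_id p b a) c = hE (qcomm a b) c.
Proof.
case: nabLC => _ [_ [_ [_ [_ [_ [torsion _]]]]]] Sp pa pb.
rewrite -hEBl -qinv_mulB torsion ?bracket_linv_field ?qinv_mulK ?Sp ?scale1r //.
all: exact: linv_field_admissible.
Qed.

Lemma pure_nabla (p a b : V) : S3 p -> pure a -> pure b -> pure (nabla_id p a b).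
Proof.
case: nabLC => adm _ Sp pa pb.
have [_ tangent] := adm _ _ (linv_field_admissible pa) (linv_field_admissible pb).
by have := tangent p Sp; rewrite /pure /nabla_id /qinv /qmul /dot !cdE => <-; ring.
Qed.

Lemma hE_nabla_koszul (p a b c : V) : S3 p -> pure a -> pure b -> pure c ->
  hE (nabla_id p a b) c = koszul a b c.
Proof.
move=> Sp pa pb pc.
have := hE_nabla_skew Sp pa pb pc; have := hE_nabla_skew Sp pb pc pa.
have := hE_nabla_skew Sp pc pa pb; have := hE_nabla_torsion b Sp pa pc.
have := hE_nabla_torsion a Sp pc pb; have := hE_nabla_torsion c Sp pa pb.
rewrite /koszul; lra.
Qed.

Lemma nabla_linv_field (p a b : V) : S3 p -> pure a -> pure b ->
  nab (linv_field a) (linv_field b) p = linv_field (christoffel a b) p.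
Proof.
move=> Sp pa pb.
have <- : nabla_id p a b = christoffel a b.
  apply: (pure_hE_inj lam0 mu0 nu0); [exact: pure_nabla|exact: pure_christoffel|].
  by move=> c pc; rewrite hE_nabla_koszul // koszul_christoffel.
by rewrite /nabla_id /linv_field qmul_invK Sp scale1r.
Qed.

Lemma curv_linv_field (p a b c : V) : S3 p -> pure a -> pure b -> pure c ->
  curv nab (linv_field a) (linv_field b) (linv_field c) p
  = linv_field (lie_curv a b c) p.
Proof.
case: (nabLC) => adm [local _] Sp pa pb pc.
have nabla2_linv_field a' b' c' : pure a' -> pure b' -> pure c' ->
    nab (linv_field a') (nab (linv_field b') (linv_field c')) p
    = linv_field (christoffel a' (christoffel b' c')) p.
  move=> pa' pb' pc'; rewrite -(nabla_linv_field Sp pa' (pure_christoffel b' c')).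
  apply: local => //; try exact: linv_field_admissible.
  - exact: adm (linv_field_admissible pb') (linv_field_admissible pc').
  - exact/linv_field_admissible/pure_christoffel.
  - by move=> q Sq; rewrite nabla_linv_field.
rewrite /curv !nabla2_linv_field // bracket_linv_field.
rewrite (nabla_linv_field Sp (pure_qcomm a b) pc).
by apply: cd_inj; rewrite /linv_field /lie_curv /qmul !cdE; ring.
Qed.

Lemma hB_curv_linv_field (p a b c d : V) : S3 p -> pure a -> pure b -> pure c ->
  hB lam mu nu p (curv nab (linv_field a) (linv_field b) (linv_field c) p)
    (linv_field d p)
  = hE (lie_curv a b c) d.
Proof.
by move=> Sp pa pb pc; rewrite curv_linv_field // hB_linv_field Sp expr1n mul1r.
Qed.

End LeviCivita.

End Connection.

Section BergerFrame.
Context {R : realType}.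
Variables lam mu nu : R.
Hypotheses (lam0 : lam != 0) (mu0 : mu != 0) (nu0 : nu != 0).

Local Notation x := (lam^-1 *: e_i0 R).
Local Notation y := (mu^-1 *: e_0m1 R).
Local Notation z := (nu^-1 *: e_0i R).

(* staged so that each rewrite only meets small terms: a single [!cdE]
   over the whole goal is several times slower *)
Local Ltac expand_coords :=
  rewrite /hE /lie_curv !cdD !cdN /christoffel ![cd (mk4 _ _ _ _) _]cdE
    /qcomm ![cd (_ - _) _]cdE /qmul ![cd (mk4 _ _ _ _) _]cdE
    /e_i0 /e_0m1 /e_0i !cdE.

Lemma Xf_linv_field : Xf lam = linv_field x.
Proof.
by apply: funext => q; apply: cd_inj; rewrite /Xf /linv_field /qmul !cdE; ring.
Qed.

Lemma Yf_linv_field : Yf mu = linv_field y.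
Proof.
by apply: funext => q; apply: cd_inj; rewrite /Yf /linv_field /qmul !cdE; ring.
Qed.

Lemma Zf_linv_field : Zf nu = linv_field z.
Proof.
by apply: funext => q; apply: cd_inj; rewrite /Zf /linv_field /qmul !cdE; ring.
Qed.

Lemma pure_frame : [/\ pure x, pure y & pure z].
Proof. by split; rewrite /pure !cdE mulr0. Qed.

Lemma hE_lie_curv_xyyx : hE lam mu nu (lie_curv lam mu nu x y y) x
  = ((lam ^+ 2 + mu ^+ 2 - nu ^+ 2) ^+ 2 + 4 * nu ^+ 2 * (mu ^+ 2 - nu ^+ 2))
    / (lam * mu * nu) ^+ 2.
Proof. by expand_coords; field; rewrite lam0 mu0 nu0. Qed.

Lemma hE_lie_curv_xzzx : hE lam mu nu (lie_curv lam mu nu x z z) x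
  = ((lam ^+ 2 - mu ^+ 2 + nu ^+ 2) ^+ 2 - 4 * mu ^+ 2 * (mu ^+ 2 - nu ^+ 2))
    / (lam * mu * nu) ^+ 2.
Proof. by expand_coords; field; rewrite lam0 mu0 nu0. Qed.

Lemma hE_lie_curv_yzzy : hE lam mu nu (lie_curv lam mu nu y z z) y
  = ((lam ^+ 2 + mu ^+ 2 + nu ^+ 2) ^+ 2 + 2 * (lam ^+ 4 - mu ^+ 4 - nu ^+ 4))
    / (lam * mu * nu) ^+ 2.
Proof. by expand_coords; field; rewrite lam0 mu0 nu0. Qed.

End BergerFrame.

Theorem mainTheorem4 (R : realType) (lam mu nu : R)
  (nab : VF R -> VF R -> VF R) :
  0 < lam -> 0 < mu -> 0 < nu ->
  is_LeviCivita (hB lam mu nu) nab ->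
  forall p : 'rV[R]_4, S3 p ->
    hB lam mu nu p (curv nab (Xf lam) (Yf mu) (Yf mu) p) (Xf lam p)
      = ((lam ^+ 2 + mu ^+ 2 - nu ^+ 2) ^+ 2 + 4 * nu ^+ 2 * (mu ^+ 2 - nu ^+ 2))
        / (lam * mu * nu) ^+ 2 /\
    hB lam mu nu p (curv nab (Xf lam) (Zf nu) (Zf nu) p) (Xf lam p)
      = ((lam ^+ 2 - mu ^+ 2 + nu ^+ 2) ^+ 2 - 4 * mu ^+ 2 * (mu ^+ 2 - nu ^+ 2))
        / (lam * mu * nu) ^+ 2 /\
    hB lam mu nu p (curv nab (Yf mu) (Zf nu) (Zf nu) p) (Yf mu p)
      = ((lam ^+ 2 + mu ^+ 2 + nu ^+ 2) ^+ 2 + 2 * (lam ^+ 4 - mu ^+ 4 - nu ^+ 4))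
        / (lam * mu * nu) ^+ 2.
Proof.
move=> /lt0r_neq0 lam0 /lt0r_neq0 mu0 /lt0r_neq0 nu0 nabLC p Sp.
have [px py pz] := pure_frame lam mu nu.
rewrite Xf_linv_field Yf_linv_field Zf_linv_field.
split; [|split].
- by rewrite hB_curv_linv_field // hE_lie_curv_xyyx.
- by rewrite hB_curv_linv_field // hE_lie_curv_xzzx.
- by rewrite hB_curv_linv_field // hE_lie_curv_yzzy.
Qed.
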